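(* Let $W$ be a subset of a metric space $(X,d)$ with $\operatorname{den}(W)=\mathfrak c=2^{\aleph_0}$. Then there exists $\varepsilon_0>0$ such that for all $\varepsilon\in\,]0,\varepsilon_0[$, $$\hat{\mathcal N}^X_\varepsilon(W)=\hat{\mathcal N}_\varepsilon(W)=\hat{\mathcal M}_\varepsilon(W)=\mathcal M^*_\varepsilon(W)=\mathfrak c.$$
   Context: $\operatorname{den}(W)$ is the minimal cardinality of a dense subset of $W$. Closed balls: $B(c,r)=\{x:d(x,c)\le r\}$; $C$ is an $\varepsilon$-net for $W$ if $W\subseteq\bigcup_{c\in C}B(c,\varepsilon)$; $A$ is $\varepsilon$-distinguishable if $d(x,y)>\varepsilon$ for distinct $x,y\in A$. $\hat{\mathcal N}^A_\varepsilon(W)$ is the minimal cardinality of an $\varepsilon$-net $C\subseteq A$ for $W$; $\hat{\mathcal N}_\varepsilon(W):=\hat{\mathcal N}^W_\varepsilon(W)$; $\hat{\mathcal M}_\varepsilon(W)$ is the smallest cardinality of an $\varepsilon$-distinguishable $A\subseteq W$ that is maximal under inclusion among $\varepsilon$-distinguishable subsets of $W$; $\mathcal M^*_\varepsilon(W)$ is the smallest cardinal $\ge\operatorname{card}(A)$ for every $\varepsilon$-distinguishable $A\subseteq W$. *)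

From Stdlib Require Import Reals.
Open Scope R_scope.
Set Implicit Arguments.

Record MetricSpace := {
  mcarrier :> Type;
  mdist : mcarrier -> mcarrier -> R;
  mdist_eq0 : forall x y, mdist x y = 0 <-> x = y;
  mdist_sym : forall x y, mdist x y = mdist y x;
  mdist_tri : forall x y z, mdist x z <= mdist x y + mdist y z
}.

Definition card_le {T U : Type} (A : T -> Prop) (B : U -> Prop) : Prop :=
  exists Rel : T -> U -> Prop,
    (forall a, A a -> exists b, B b /\ Rel a b) /\
    (forall a a' b, A a -> A a' -> Rel a b -> Rel a' b -> a = a').

Definition card_eq {T U : Type} (A : T -> Prop) (B : U -> Prop) : Prop :=
  card_le A B /\ card_le B A.

(** The continuum c = 2^aleph_0, represented by the full set of nat -> bool. *)
Definition continuum : (nat -> bool) -> Prop := fun _ => True.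

Definition min_card_is {T U : Type} (P : (T -> Prop) -> Prop) (K : U -> Prop) : Prop :=
  (exists S, P S /\ card_eq S K) /\ (forall S, P S -> card_le K S).

(** "the smallest cardinal >= card S for every S satisfying P is card K":
    K is an upper bound, and no cardinal strictly below card K (represented by
    a subset L of nat -> bool with ~ card K <= card L) is an upper bound. *)
Definition sup_card_is {T : Type} (P : (T -> Prop) -> Prop)
    (K : (nat -> bool) -> Prop) : Prop :=
  (forall S, P S -> card_le S K) /\
  (forall L : (nat -> bool) -> Prop, ~ card_le K L ->
     exists S, P S /\ ~ card_le S L).

Section MetricNotions.
Context {X : MetricSpace}.

Definition subset (A B : X -> Prop) : Prop := forall x, A x -> B x.

Definition cball (c : X) (r : R) : X -> Prop := fun x => mdist X x c <= r.

Definition dense_in (W D : X -> Prop) : Prop :=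
  subset D W /\
  forall w, W w -> forall e, 0 < e -> exists x, D x /\ mdist X w x < e.

Definition is_net (A W : X -> Prop) (eps : R) (C : X -> Prop) : Prop :=
  subset C A /\ forall w, W w -> exists c, C c /\ cball c eps w.

Definition distinguishable (W : X -> Prop) (eps : R) (A : X -> Prop) : Prop :=
  subset A W /\ forall x y, A x -> A y -> x <> y -> mdist X x y > eps.

Definition maximal_distinguishable (W : X -> Prop) (eps : R) (A : X -> Prop) : Prop :=
  distinguishable W eps A /\
  forall B, distinguishable W eps B -> subset A B -> subset B A.

End MetricNotions.

From Stdlib Require Import Reals Lra Lia Classical ClassicalEpsilon FunctionalExtensionality Cantor.
From mathcomp Require classical_sets.
Open Scope R_scope.

(** Proof of Corollary 2.11.  Fix a dense subset D of W of cardinality c.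

    - Upper bound: an eps-distinguishable set injects into D (send each of
      its points to a point of D at distance < eps/2), so it has size <= c.
    - Lower bound: for some n, every net for W of radius <= 1/(n+1) has size
      >= c.  Otherwise pick nets C_n of radius 1/(n+1) of size < c, move every
      centre to a point of W within the radius; the resulting sets have size
      < c and their union is dense in W.  A diagonal (König-type) argument
      shows that a countable union of sets of size < c has size < c,
      contradicting den(W) = c.
    - By Zorn's lemma maximal eps-distinguishable sets exist, and each of
      them is an eps-net for W with centres in W.
    For 0 < eps < 1/(n+1), D itself is an eps-net of size c, every net has
    size >= c, and maximal distinguishable sets are nets of size <= c; this
    yields all four cardinal equalities. *)

Lemma card_le_trans {T U V : Type} (A : T -> Prop) (B : U -> Prop) (C : V -> Prop) :
  card_le A B -> card_le B C -> card_le A C.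
Proof.
  intros [R1 [Htot1 Hinj1]] [R2 [Htot2 Hinj2]].
  exists (fun a c => exists b, B b /\ R1 a b /\ R2 b c). split.
  - intros a Ha. destruct (Htot1 a Ha) as [b [Hb Rab]].
    destruct (Htot2 b Hb) as [c [Hc Rbc]].
    exists c. split; [exact Hc |]. exists b; auto.
  - intros a a' c Ha Ha' [b [Hb [Rab Rbc]]] [b' [Hb' [Rab' Rbc']]].
    assert (b = b') by (apply (Hinj2 b b' c); auto). subst b'.
    apply (Hinj1 a a' b); auto.
Qed.

(** Countable union.  A family of sequences [h : nat -> nat -> bool] is coded
    by a single sequence through the Cantor pairing of [nat * nat]. *)
Definition pair_code (h : nat -> nat -> bool) : nat -> bool :=
  fun k => h (fst (Cantor.of_nat k)) (snd (Cantor.of_nat k)).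

Lemma pair_code_inj (h h' : nat -> nat -> bool) : pair_code h = pair_code h' -> h = h'.
Proof.
  intros E. apply functional_extensionality; intro i.
  apply functional_extensionality; intro j.
  pose proof (f_equal (fun f => f (Cantor.to_nat (i, j))) E) as Eij.
  unfold pair_code in Eij. rewrite Cantor.cancel_of_to in Eij. exact Eij.
Qed.

(** Given an injection of (nat -> nat -> bool) into the union, for each n some
    value [a n] of the n-th row is never sent into [Dn n] (otherwise the
    n-th row would inject c into [Dn n]); the diagonal sequence [a] then
    cannot be sent anywhere. *)
Lemma countable_union_below_continuum {T : Type} (Dn : nat -> T -> Prop) :
  (forall n, ~ card_le continuum (Dn n)) ->
  ~ card_le continuum (fun x => exists n, Dn n x).
Proof.
  intros Hsmall [Rel [Htot Hinj]].
  set (Rh := fun h x => Rel (pair_code h) x).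
  assert (Rh_inj : forall h h' x, Rh h x -> Rh h' x -> h = h').
  { intros h h' x H1 H2. apply pair_code_inj. exact (Hinj (pair_code h) (pair_code h') x I I H1 H2). }
  assert (row_avoids : forall n, exists a : nat -> bool,
             forall h, h n = a -> ~ exists x, Dn n x /\ Rh h x).
  { intro n. apply NNPP. intro Hall. apply (Hsmall n).
    exists (fun a x => exists h, h n = a /\ Rh h x /\ Dn n x). split.
    - intros a _. apply NNPP. intro Hno. apply Hall. exists a.
      intros h Hh [x [Hx Rx]]. apply Hno. exists x. split; [exact Hx |]. exists h; auto.
    - intros a a' x _ _ [h [<- [R1 _]]] [h' [<- [R2 _]]].
      rewrite (Rh_inj h h' x R1 R2). reflexivity. }
  destruct (choice _ row_avoids) as [a Ha].
  destruct (Htot (pair_code a) I) as [x [[m Hm] Rx]].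
  apply (Ha m a eq_refl). exists x. split; assumption.
Qed.

Section MetricCardinals.
Context {X : MetricSpace}.
Variable W : X -> Prop.

(** Distinct points of an eps-distinguishable set have disjoint open
    eps/2-balls, so any dense subset of W contains a distinct witness for
    each of them. *)
Lemma distinguishable_card_le_dense (D S : X -> Prop) (eps : R) :
  0 < eps -> dense_in W D -> distinguishable W eps S -> card_le S D.
Proof.
  intros He [_ HD] [HSW HS].
  exists (fun s d => D d /\ mdist X s d < eps / 2). split.
  - intros s Hs. destruct (HD s (HSW s Hs) (eps / 2)) as [d [Dd Hd]]; [lra |].
    exists d; auto.
  - intros s s' d Hs Hs' [_ H1] [_ H2]. apply NNPP; intro Hne.
    pose proof (HS s s' Hs Hs' Hne) as Hfar.
    pose proof (mdist_tri X s d s') as Htri. rewrite (mdist_sym X d s') in Htri. lra.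
Qed.

Lemma dense_is_net (A D : X -> Prop) (eps : R) :
  0 < eps -> dense_in W D -> subset D A -> is_net A W eps D.
Proof.
  intros He [_ HD] HDA. split; [exact HDA |]. intros w Hw.
  destruct (HD w Hw eps He) as [d [Dd Hd]]. exists d. split; [exact Dd |].
  unfold cball. lra.
Qed.

Lemma is_net_weaken (A : X -> Prop) (eps r : R) (C : X -> Prop) :
  eps <= r -> is_net A W eps C -> is_net (fun _ => True) W r C.
Proof.
  intros Hr [_ HC]. split; [intros x _; exact I |].
  intros w Hw. destruct (HC w Hw) as [c [Cc Hc]]. exists c. split; [exact Cc |].
  unfold cball in *. lra.
Qed.

(** Moving the centres of a net into W.  Given a point [w0] of W, [retract r c]
    is a point of W within distance r of c, whenever such a point exists. *)
Section Retraction.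
Variable w0 : X.

Definition retract (r : R) (c : X) : X :=
  epsilon (inhabits w0) (fun w => W w /\ mdist X w c <= r).

Definition retracted_net (r : R) (C : X -> Prop) : X -> Prop :=
  fun x => exists c, C c /\ x = retract r c /\ W x.

Lemma retracted_net_card (r : R) (C : X -> Prop) : card_le (retracted_net r C) C.
Proof.
  exists (fun x c => C c /\ x = retract r c). split.
  - intros x [c [Cc [E _]]]. exists c; auto.
  - intros x x' c _ _ [_ E] [_ E']. congruence.
Qed.

Lemma retracted_net_close (A C : X -> Prop) (r : R) (w : X) :
  is_net A W r C -> W w ->
  exists x, retracted_net r C x /\ mdist X w x <= 2 * r.
Proof.
  intros [_ HC] Hw. destruct (HC w Hw) as [c [Cc Hc]]. unfold cball in Hc.
  assert (Hx : W (retract r c) /\ mdist X (retract r c) c <= r).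
  { unfold retract. apply epsilon_spec. exists w; auto. }
  exists (retract r c). split.
  - exists c. repeat split; tauto.
  - pose proof (mdist_tri X w c (retract r c)) as Htri.
    rewrite (mdist_sym X c (retract r c)) in Htri. lra.
Qed.

Lemma retracted_nets_dense (C : nat -> X -> Prop) :
  (forall n, is_net (fun _ => True) W (/ INR (S n)) (C n)) ->
  dense_in W (fun x => exists n, retracted_net (/ INR (S n)) (C n) x).
Proof.
  intros Hnets. split.
  - intros x [n [c [_ [_ Wx]]]]. exact Wx.
  - intros w Hw e He.
    destruct (archimed_cor1 (e / 2)) as [N [HN HN0]]; [lra |].
    destruct N as [| n]; [lia |].
    destruct (retracted_net_close _ _ _ w (Hnets n) Hw) as [x [Hx Hwx]].
    exists x. split; [exists n; exact Hx | lra].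
Qed.
End Retraction.

Lemma large_dense_nonempty :
  (forall D, dense_in W D -> card_le continuum D) -> exists w, W w.
Proof.
  intros Hmin. apply NNPP. intro Hempty.
  assert (Hd : dense_in W (fun _ => False)).
  { split; [intros x [] | intros w Hw; exfalso; apply Hempty; eauto]. }
  destruct (Hmin _ Hd) as [Rel [Htot _]].
  destruct (Htot (fun _ => false) I) as [b [[] _]].
Qed.

Lemma small_radius_nets_large :
  (forall D, dense_in W D -> card_le continuum D) ->
  exists r, 0 < r /\
    forall (A C : X -> Prop) eps, eps <= r -> is_net A W eps C -> card_le continuum C.
Proof.
  intros Hmin. destruct (large_dense_nonempty Hmin) as [w0 Hw0].
  apply NNPP. intro Hno.
  assert (Hsmall : forall n, exists C, is_net (fun _ => True) W (/ INR (S n)) C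
                                   /\ ~ card_le continuum C).
  { intro n. apply NNPP. intro Hn. apply Hno. exists (/ INR (S n)). split.
    - apply Rinv_0_lt_compat, lt_0_INR. lia.
    - intros A C eps Heps HC. apply NNPP. intro HCs. apply Hn.
      exists C. split; [exact (is_net_weaken _ _ _ _ Heps HC) | exact HCs]. }
  destruct (choice _ Hsmall) as [C HC].
  apply (countable_union_below_continuum
           (fun n => retracted_net w0 (/ INR (S n)) (C n))).
  - intros n Hn. apply (proj2 (HC n)).
    exact (card_le_trans _ _ _ Hn (retracted_net_card w0 _ _)).
  - apply Hmin, retracted_nets_dense. intro n. exact (proj1 (HC n)).
Qed.

(** The union of a chain of eps-distinguishable sets is eps-distinguishable:
    two of its points already lie in a common member of the chain. *)
Lemma distinguishable_chain_union (eps : R) (F : (X -> Prop) -> Prop) :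
  (forall A, F A -> distinguishable W eps A) ->
  (forall A B, F A -> F B -> subset A B \/ subset B A) ->
  distinguishable W eps (fun x => exists A, F A /\ A x).
Proof.
  intros Hdist Hchain. split.
  - intros x [A [FA Ax]]. exact (proj1 (Hdist A FA) x Ax).
  - intros x y [A [FA Ax]] [B [FB By]] Hxy.
    destruct (Hchain A B FA FB) as [HAB | HBA].
    + apply (proj2 (Hdist B FB)); auto.
    + apply (proj2 (Hdist A FA)); auto.
Qed.

Lemma maximal_distinguishable_exists (eps : R) :
  exists M, maximal_distinguishable W eps M.
Proof.
  assert (Hchains : forall F, classical_sets.subset F (distinguishable W eps) ->
            classical_sets.total_on F classical_sets.subset ->
            distinguishable W eps (classical_sets.bigcup F (fun A => A))).
  { intros F HF Hchain.
    assert (Hu := distinguishable_chain_union eps F HF Hchain).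
    split.
    - intros x [A FA Ax]. apply (proj1 Hu). exists A; auto.
    - intros x y [A FA Ax] [B FB By]. apply (proj2 Hu); [exists A | exists B]; auto. }
  destruct (classical_sets.Zorn_bigcup Hchains) as [M [HM Hmax]].
  exists M. split; [exact HM |].
  intros B HB HMB. apply NNPP. intro HBM. exact (Hmax B (conj HMB HBM) HB).
Qed.

Lemma distinguishable_add (eps : R) (A : X -> Prop) (w : X) :
  distinguishable W eps A -> W w -> (forall a, A a -> mdist X a w > eps) ->
  distinguishable W eps (fun y => A y \/ y = w).
Proof.
  intros [HAW HA] Hw Hfar. split.
  - intros y [Ay | ->]; auto.
  - intros x y [Ax | ->] [Ay | ->] Hxy; auto.
    + rewrite mdist_sym. auto.
    + exfalso; apply Hxy; reflexivity.
Qed.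

(** A maximal eps-distinguishable subset of W is an eps-net for W: a point of
    W not covered by it could be added to it. *)
Lemma maximal_distinguishable_is_net (eps : R) (M : X -> Prop) :
  0 <= eps -> maximal_distinguishable W eps M -> is_net W W eps M.
Proof.
  intros He [HMd HMmax]. split; [exact (proj1 HMd) |].
  intros w Hw. apply NNPP. intro Hunc.
  assert (Hfar : forall a, M a -> mdist X a w > eps).
  { intros a Ma. apply Rnot_le_gt. intro Hle. apply Hunc. exists a. split; [exact Ma |].
    unfold cball. rewrite mdist_sym. exact Hle. }
  assert (Mw : M w).
  { apply (HMmax _ (distinguishable_add eps M w HMd Hw Hfar)); [intros y Hy; left; exact Hy |].
    right; reflexivity. }
  apply Hunc. exists w. split; [exact Mw |].
  unfold cball. rewrite (proj2 (mdist_eq0 X w w) eq_refl). exact He.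
Qed.

End MetricCardinals.

Theorem corollary2p11 (X : MetricSpace) (W : X -> Prop) :
  min_card_is (dense_in W) continuum ->
  exists eps0 : R, 0 < eps0 /\
    forall eps : R, 0 < eps < eps0 ->
      min_card_is (is_net (fun _ : X => True) W eps) continuum /\
      min_card_is (is_net W W eps) continuum /\
      min_card_is (maximal_distinguishable W eps) continuum /\
      sup_card_is (distinguishable W eps) continuum.
Proof.
  intros [[D [HD HDc]] Hmin].
  destruct (small_radius_nets_large W Hmin) as [r [Hr Hlarge]].
  exists r. split; [exact Hr |]. intros eps [He Her].
  assert (Hnets : forall A C, is_net A W eps C -> card_le continuum C)
    by (intros A C; apply (Hlarge A C eps); lra).
  assert (Hbound : forall S, distinguishable W eps S -> card_le S continuum)
    by (intros S HS; exact (card_le_trans _ _ _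
          (distinguishable_card_le_dense W D S eps He HD HS) (proj1 HDc))).
  destruct (maximal_distinguishable_exists W eps) as [M HM].
  assert (Hmaxnets : forall A, maximal_distinguishable W eps A -> card_le continuum A)
    by (intros A HA; exact (Hnets W A (maximal_distinguishable_is_net W eps A (Rlt_le _ _ He) HA))).
  assert (HMc := Hmaxnets M HM).
  split; [| split; [| split]].
  - split; [| exact (Hnets _)].
    exists D. split; [apply (dense_is_net W); auto; intros x _; exact I | exact HDc].
  - split; [| exact (Hnets _)].
    exists D. split; [apply (dense_is_net W); auto; exact (proj1 HD) | exact HDc].
  - split; [| exact Hmaxnets].
    exists M. split; [exact HM | split; [exact (Hbound M (proj1 HM)) | exact HMc]].
  - split; [exact Hbound |].
    intros L HL. exists M. split; [exact (proj1 HM) |].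
    intro HML. exact (HL (card_le_trans _ _ _ HMc HML)).
Qed.
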